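(* Let $A$ be the filtered boundary matrix of a Morse decomposition with respect to an admissible enumeration $\sigma_1,\dots,\sigma_n$, let $A_{out}$ be the matrix obtained after the reduction phase of ConMat, and let $\bar A$ be any complete column reduction of $A_{out}$. Then for every $j$, column $j$ is homogeneous in $A_{out}$ if and only if column $j$ is homogeneous in $\bar A$.
   Context: $K$ is a finite simplicial complex ($\tau\le\sigma$: $\tau$ is a face of $\sigma$; $\mathrm{cl}(\sigma)=\{\tau:\tau\le\sigma\}$). A multivector field $\mathcal V$ on $K$ is a partition of $K$ into convex sets $V$ (if $\sigma,\tau\in V$ and $\sigma\le\mu\le\tau$ then $\mu\in V$); $[\sigma]_{\mathcal V}$ is the part containing $\sigma$, $F_{\mathcal V}(\sigma)=[\sigma]_{\mathcal V}\cup\mathrm{cl}(\sigma)$, and a path is a sequence $\sigma_1,\dots,\sigma_r$ with $\sigma_k\in F_{\mathcal V}(\sigma_{k-1})$. A Morse decomposition indexed by a finite poset $(P,\le_P)$ is a partition $K=\bigsqcup_{p\in P}M_p$ such that every path from $M_p$ to $M_q$ has $q\le_P p$; $[\sigma]_P$ is the $p$ with $\sigma\in M_p$. An admissible enumeration is $\sigma_1,\dots,\sigma_n$ of all simplices of $K$ such that (a) for some linear extension $\le_{lin}$ of $\le_P$, $i\le j\Rightarrow[\sigma_i]_P\le_{lin}[\sigma_j]_P$; (b) if $\sigma_i$ is a proper face of $\sigma_j$ then $i<j$. The filtered boundary matrix $A$ is the $n\times n$ $\mathbb Z_2$-matrix with $A[i,j]=1$ iff $\sigma_i$ is a codimension-one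 face of $\sigma_j$; row/column $i$ represents $\sigma_i$ (in all matrices derived from $A$ by column additions). For a nonzero column $j$ of a matrix $B$, $\mathrm{low}_B(j)$ is the largest $i$ with $B[i,j]=1$. Column $j$ is homogeneous in $B$ if it is nonzero and $\sigma_j$, $\sigma_{\mathrm{low}_B(j)}$ lie in the same Morse set. ConMat reduction phase on $A$ (in place): for $j=1,\dots,n$: for $i=\mathrm{low}_A(j)$ down to $1$: if $A[i,j]=1$ and some column $s<j$ of the current matrix is homogeneous with $\mathrm{low}_A(s)=i$, add column $s$ to column $j$ (mod 2). $A_{out}$ is the result. A complete column reduction of a matrix $B$ is a matrix $\bar B$ obtained from $B$ by a finite sequence of additions of a column $s$ to a column $j$ with $s<j$ (no homogeneity restriction) such that distinct nonzero columns of $\bar B$ have distinct values of $\mathrm{low}$. *)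

From HB Require Import structures.
From mathcomp Require Import all_boot all_order all_algebra.
Set Implicit Arguments. Unset Strict Implicit. Unset Printing Implicit Defensive.
Import Order.TTheory GRing.Theory.

Section Simplicial.
Variable V : finType.
Implicit Types (K : {set {set V}}) (s t : {set V}).

Definition simplicial_complex K : Prop :=
  forall s, s \in K -> s != set0 /\ (forall t, t != set0 -> t \subset s -> t \in K).

Definition closure K s : {set {set V}} := [set t in K | t \subset s].

Definition codim1 t s : bool := (t \subset s) && (#|s| == #|t|.+1).

Definition convex K (X : {set {set V}}) : Prop :=
  forall s t mu, s \in X -> t \in X -> mu \in K ->
    s \subset mu -> mu \subset t -> mu \in X.

Definition multivector_field K (mvf : {set {set {set V}}}) : Prop :=
  partition mvf K /\ forall X, X \in mvf -> convex K X.

Definition Fmvf K (mvf : {set {set {set V}}}) s : {set {set V}} :=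
  pblock mvf s :|: closure K s.

Definition path_rel K mvf : rel {set V} := fun a b => b \in Fmvf K mvf a.

Definition morse_decomposition d (P : finPOrderType d) K mvf
    (M : P -> {set {set V}}) : Prop :=
  [/\ (forall p q, p != q -> [disjoint M p & M q]),
      (\bigcup_(p : P) M p) = K &
      (forall p q x (s : seq {set V}), x \in M p -> path (path_rel K mvf) x s ->
         last x s \in M q -> (q <= p)%O)].

Definition linear_extension d (P : finPOrderType d) (lin : rel P) : Prop :=
  [/\ reflexive lin, antisymmetric lin, transitive lin, total lin &
      forall p q : P, (p <= q)%O -> lin p q].

Definition admissible_enumeration d (P : finPOrderType d) K
    (M : P -> {set {set V}}) n (sigma : 'I_n -> {set V}) : Prop :=
  [/\ injective sigma,
      (forall i, sigma i \in K),
      (forall s, s \in K -> exists i, sigma i = s),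
      (exists lin : rel P, linear_extension lin /\
         forall (i j : 'I_n) p q, i <= j -> sigma i \in M p -> sigma j \in M q -> lin p q) &
      (forall i j : 'I_n, sigma i \proper sigma j -> i < j)].

Definition same_morse d (P : finPOrderType d) (M : P -> {set {set V}}) n
    (sigma : 'I_n -> {set V}) (i j : 'I_n) : bool :=
  [exists p, (sigma i \in M p) && (sigma j \in M p)].

Definition boundary_matrix n (sigma : 'I_n -> {set V}) : 'M['F_2]_n :=
  \matrix_(i, j) (if codim1 (sigma i) (sigma j) then 1%R else 0%R).

End Simplicial.

Section Reduction.
Variable n : nat.
Implicit Types (B : 'M['F_2]_n).

Definition low B (j : 'I_n) : option 'I_n :=
  [pick i | (B i j != 0%R) && [forall k, (B k j != 0%R) ==> (k <= i)]].

Definition homogeneous (same : 'I_n -> 'I_n -> bool) B (j : 'I_n) : bool :=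
  if low B j is Some i then same j i else false.

Definition addcol B (s j : 'I_n) : 'M['F_2]_n :=
  \matrix_(a, b) (if b == j then (B a j + B a s)%R else B a b).

Definition conmat_step same B (j i : 'I_n) : 'M['F_2]_n :=
  if B i j != 0%R then
    if [pick s : 'I_n | (s < j) && homogeneous same B s && (low B s == Some i)]
       is Some s then addcol B s j else B
  else B.

Definition conmat_col same B (j : 'I_n) : 'M['F_2]_n :=
  if low B j is Some l then
    foldl (fun C i => conmat_step same C j i) B [seq i : 'I_n <- rev (enum 'I_n) | i <= l]
  else B.

Definition conmat_reduce same B : 'M['F_2]_n :=
  foldl (conmat_col same) B (enum 'I_n).

Definition complete_column_reduction B (Abar : 'M['F_2]_n) : Prop :=
  (exists ops : seq ('I_n * 'I_n),
     all (fun p : 'I_n * 'I_n => p.1 < p.2) ops /\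
     Abar = foldl (fun C (p : 'I_n * 'I_n) => addcol C p.1 p.2) B ops) /\
  (forall j1 j2 : 'I_n, j1 != j2 -> low Abar j1 != None -> low Abar j1 != low Abar j2).

End Reduction.

From HB Require Import structures.
From mathcomp Require Import all_boot all_order all_algebra.
Set Implicit Arguments. Unset Strict Implicit. Unset Printing Implicit Defensive.
Import GRing.Theory.

(** The homogeneous part of a matrix keeps the entries (i, j) such that
  sigma_i and sigma_j lie in the same Morse set.  Morse sets are intervals of
  an admissible enumeration and all matrices involved are strictly upper
  triangular, so a column is homogeneous iff its homogeneous part is nonzero,
  and adding column s to column j acts on homogeneous parts either as the same
  column addition (s and j in one Morse set) or not at all.  Hence the
  homogeneous parts of A_out and of Abar have, for every k, the same span of
  their first k columns.  Both homogeneous parts are reduced: for Abar by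
  completeness, for A_out because ConMat leaves no nonzero entry of a column
  at the low of an earlier homogeneous column.  In a reduced matrix a column
  vanishes iff it lies in the span of the previous ones, a property that only
  depends on these spans. *)

Lemma F2_addrr (a : 'F_2) : (a + a = 0)%R.
Proof. by apply: addrr_pchar2; exact: pchar_Fp. Qed.

Lemma F2_eq1 (a : 'F_2) : (a != 0)%R -> a = 1%R.
Proof. by case: a => [[|[|k]] //= ?] _; apply/val_inj. Qed.

Lemma ord_ltn_neq n (i j : 'I_n) : i < j -> i != j.
Proof. by apply: contraTneq => ->; rewrite ltnn. Qed.

Lemma ord_ltn_trans n : transitive (fun i j : 'I_n => i < j).
Proof. by move=> ? ? ?; exact: ltn_trans. Qed.

Lemma ord_enum_sorted n : sorted (fun i j : 'I_n => i < j) (enum 'I_n).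
Proof. by have := iota_ltn_sorted 0 n; rewrite -val_enum_ord sorted_map. Qed.

Lemma foldl_inv (T S : Type) (f : T -> S -> T) (I : T -> Prop) x s :
  I x -> (forall y a, I y -> I (f y a)) -> I (foldl f x s).
Proof. by elim: s x => //= a s IHs x Ix fI; apply: IHs => //; apply: fI. Qed.

Lemma col_neq0P (R : nmodType) m n (A : 'M[R]_(m, n)) j :
  reflect (exists i, A i j != 0%R) (col j A != 0%R).
Proof.
apply: (iffP idP) => [|[i]]; last by apply: contraNneq => /colP/(_ i); rewrite !mxE => ->.
move=> Aj; apply/existsP; apply: contraNT Aj => /existsPn A0.
by apply/eqP/colP => i; rewrite !mxE; apply/eqP/negPn.
Qed.

Section Matrices.
Variable n : nat.
Implicit Types (B C W : 'M['F_2]_n) (i j k l r s : 'I_n).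
Local Open Scope ring_scope.

Lemma low_neq0 B j i : low B j = Some i -> B i j != 0.
Proof. by rewrite /low; case: pickP => // x /andP[Bx _] [<-]. Qed.

Lemma low_max B j i k : low B j = Some i -> B k j != 0 -> (k <= i)%N.
Proof.
rewrite /low; case: pickP => // x /andP[_ /forallP max_x] [<-] Bk.
exact: implyP (max_x k) Bk.
Qed.

Lemma low_Some B j i :
  B i j != 0 -> (forall k, B k j != 0 -> (k <= i)%N) -> low B j = Some i.
Proof.
move=> Bi max_i; rewrite /low; case: pickP => [x /andP[Bx /forallP max_x]|none].
  by congr Some; apply/val_inj/eqP; rewrite eqn_leq max_i //= (implyP (max_x i)).
have := none i; rewrite Bi /= => /negP[]; apply/forallP => k; apply/implyP; exact: max_i.
Qed.

Lemma low_None B j i : low B j = None -> B i j = 0.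
Proof.
move=> lowN; apply/eqP; apply: contraT => Bi.
have [k Bk max_k] := @arg_maxnP _ i (fun k => B k j != 0) val Bi.
by rewrite (low_Some Bk max_k) in lowN.
Qed.

Lemma eq0_above_low B j k : (forall l, low B j = Some l -> (l < k)%N) -> B k j = 0.
Proof.
case E: (low B j) => [l|] low_lt; last exact: low_None.
by apply/eqP; apply: contraT => /(low_max E); rewrite leqNgt low_lt.
Qed.

Lemma eq_low B C j j' : (forall i, B i j = C i j') -> low B j = low C j'.
Proof.
move=> BC; apply: eq_pick => i /=; rewrite BC; congr andb.
by apply: eq_forallb => k; rewrite BC.
Qed.

Definition strictly_upper B := forall i j, B i j != 0 -> (i < j)%N.

Definition addcols B (ops : seq ('I_n * 'I_n)) :=
  foldl (fun C p => addcol C p.1 p.2) B ops.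

Definition left_to_right (ops : seq ('I_n * 'I_n)) :=
  all (fun p : 'I_n * 'I_n => p.1 < p.2)%N ops.

Lemma strictly_upper_addcol B s j :
  strictly_upper B -> (s < j)%N -> strictly_upper (addcol B s j).
Proof.
move=> uB sj a b; rewrite mxE; have [-> {b}|_] := eqVneq b j; last exact: uB.
have [/eqP Baj|/uB //] := boolP (B a j == 0).
by rewrite Baj add0r => /uB as_; exact: ltn_trans sj.
Qed.

Lemma strictly_upper_addcols B ops :
  strictly_upper B -> left_to_right ops -> strictly_upper (addcols B ops).
Proof.
elim: ops B => //= -[s j] ops IHops B uB /andP[sj ops_lr].
by apply: IHops => //; apply: strictly_upper_addcol.
Qed.

Lemma addcolK B s j : s != j -> addcol (addcol B s j) s j = B.
Proof.
move=> sj; apply/matrixP => a b; rewrite !mxE.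
by case: eqVneq => [->|//]; rewrite eqxx (negbTE sj) -addrA F2_addrr addr0.
Qed.

Definition reduced W :=
  forall j1 j2, j1 != j2 -> low W j1 != None -> low W j1 != low W j2.

(* The rows of [cols_lt k W] are the columns of [W] of index < k (the other
   rows are zero), so its row space is the span of these columns. *)
Definition cols_lt (k : nat) W : 'M['F_2]_n :=
  \matrix_(r, i) if (r < k)%N then W i r else 0.

Lemma cols_lt_addcol_sub W s j (k : nat) :
  (s < j)%N -> (cols_lt k (addcol W s j) <= cols_lt k W)%MS.
Proof.
move=> sj; apply/row_subP => r; have [-> {r}|rj] := eqVneq r j; last first.
  suff ->: row r (cols_lt k (addcol W s j)) = row r (cols_lt k W) by exact: row_sub.
  by apply/rowP => i; rewrite !mxE (negbTE rj).
have [jk|kj] := ltnP j k; last first.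
  suff ->: row j (cols_lt k (addcol W s j)) = 0 by exact: sub0mx.
  by apply/rowP => i; rewrite !mxE ltnNge kj.
suff ->: row j (cols_lt k (addcol W s j)) = row j (cols_lt k W) + row s (cols_lt k W).
  by rewrite addmx_sub ?row_sub.
by apply/rowP => i; rewrite !mxE eqxx jk (ltn_trans sj jk).
Qed.

Lemma cols_lt_addcol W s j (k : nat) :
  (s < j)%N -> (cols_lt k (addcol W s j) :=: cols_lt k W)%MS.
Proof.
move=> sj; apply/eqmxP/andP; split; first exact: cols_lt_addcol_sub.
by rewrite -{1}(addcolK W (ord_ltn_neq sj)) cols_lt_addcol_sub.
Qed.

Lemma cols_lt_addcols W ops (k : nat) :
  left_to_right ops -> (cols_lt k (addcols W ops) :=: cols_lt k W)%MS.
Proof.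
elim: ops W => [|[s j] ops IHops] W /=; first by move=> _; exact: eqmx_refl.
by case/andP=> sj /IHops IH; apply: eqmx_trans (IH _) (cols_lt_addcol _ _ sj).
Qed.

(* The nonzero columns of a reduced matrix have pairwise distinct lows, hence
   are linearly independent: in a combination, the largest low survives. *)
Lemma reduced_col_in_span W j :
  reduced W -> ((col j W)^T <= cols_lt j W)%MS -> col j W = 0.
Proof.
move=> redW /submxP[D colj].
have Wj i : W i j = \sum_r D 0 r * (if (r < j)%N then W i r else 0).
  have := congr1 (fun v : 'rV_n => v 0 i) colj; rewrite !mxE => ->.
  by apply: eq_bigr => r _; rewrite mxE.
pose T := [pred r : 'I_n | [&& (r < j)%N, D 0 r != 0 & low W r != None]].
pose lown (r : 'I_n) := if low W r is Some l then val l else 0%N.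
apply/colP => i; rewrite !mxE; case: (pickP T) => [r0 Tr0|T0]; last first.
  rewrite Wj big1 // => r _; case: ifP => rj; last by rewrite mulr0.
  have [->|Dr] := eqVneq (D 0 r) 0; first by rewrite mul0r.
  have := T0 r; rewrite /= rj Dr /= => /negbFE/eqP/low_None ->.
  by rewrite mulr0.
have [rs /and3P[rsj Drs] + max_rs] := @arg_maxnP _ r0 T lown Tr0.
case lowrs: (low W rs) => [L|] // _.
have others0 k r : (L <= k)%N -> r != rs -> D 0 r * (if (r < j)%N then W k r else 0) = 0.
  move=> Lk rrs; case: ifP => rj; last by rewrite mulr0.
  have [->|Dr] := eqVneq (D 0 r) 0; first by rewrite mul0r.
  rewrite (@eq0_above_low W r k) ?mulr0 // => l lowl.
  have lL : (l <= L)%N by have := max_rs r; rewrite inE /lown rj Dr lowl lowrs; apply.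
  rewrite (leq_trans _ Lk) // ltn_neqAle lL andbT.
  have := redW r rs rrs; rewrite lowl lowrs => /(_ isT).
  by apply: contra => /eqP/val_inj ->.
have Wk k : (L <= k)%N -> W k j = D 0 rs * W k rs.
  move=> Lk; rewrite Wj (bigD1 rs) //= big1 ?addr0 ?rsj // => r.
  exact: others0.
have lowj : low W j = Some L.
  apply: low_Some => [|k]; first by rewrite Wk // mulf_neq0 ?(low_neq0 lowrs).
  rewrite leqNgt; apply: contraNN => Lk; rewrite Wk ?(ltnW Lk) //.
  by rewrite (@eq0_above_low W rs k) ?mulr0 // lowrs => l [<-].
by have := redW rs j (ord_ltn_neq rsj); rewrite lowrs lowj eqxx => /(_ isT).
Qed.

Lemma reduced_col_eq0 W j :
  reduced W -> (col j W == 0) = (cols_lt j.+1 W <= cols_lt j W)%MS.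
Proof.
move=> redW; apply/eqP/idP => [colj0|sub].
  suff ->: cols_lt j.+1 W = cols_lt j W by [].
  apply/matrixP => r i; rewrite !mxE ltnS leq_eqVlt.
  case: eqVneq => [/val_inj -> /=|//]; rewrite ltnn.
  by have := congr1 (fun v : 'cV_n => v i 0) colj0; rewrite !mxE.
apply: reduced_col_in_span => //; apply: submx_trans sub.
suff ->: (col j W)^T = row j (cols_lt j.+1 W) by exact: row_sub.
by apply/rowP => i; rewrite !mxE ltnSn.
Qed.

End Matrices.

Section ConMat.
Variables (n : nat) (same : rel 'I_n).
Implicit Types (B C : 'M['F_2]_n) (i j s : 'I_n).
Local Open Scope ring_scope.

Definition hpivot B j i :=
  [exists s : 'I_n, (s < j)%N && homogeneous same B s && (low B s == Some i)].

Definition hpivot_free B j := forall i, B i j != 0 -> ~~ hpivot B j i.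

Lemma eq_homogeneous B C j :
  (forall i, B i j = C i j) -> homogeneous same B j = homogeneous same C j.
Proof. by move=> BC; rewrite /homogeneous (eq_low BC). Qed.

Lemma eq_hpivot B C j i :
  (forall s, (s < j)%N -> forall a, B a s = C a s) -> hpivot B j i = hpivot C j i.
Proof.
move=> BC; apply: eq_existsb => s; case sj: (s < j)%N => //=.
by rewrite (eq_homogeneous (BC s sj)) (eq_low (BC s sj)).
Qed.

Variant conmat_step_spec C j i : 'M['F_2]_n -> Prop :=
  | ConmatStepKeep of (C i j != 0 -> ~~ hpivot C j i) : conmat_step_spec C j i C
  | ConmatStepAdd s of (s < j)%N & low C s = Some i & C i j != 0 :
      conmat_step_spec C j i (addcol C s j).

Lemma conmat_stepP C j i : conmat_step_spec C j i (conmat_step same C j i).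
Proof.
rewrite /conmat_step; case: ifP => [Cij|/negbT/negPn/eqP C0]; last first.
  by constructor; rewrite C0 eqxx.
case: pickP => [s /andP[/andP[sj _] /eqP lows]|none]; first exact: ConmatStepAdd.
by constructor=> _; apply/existsPn => s; exact/negbT/none.
Qed.

Lemma strictly_upper_conmat_step C j i :
  strictly_upper C -> strictly_upper (conmat_step same C j i).
Proof. by case: conmat_stepP => // s sj _ _ uC; apply: strictly_upper_addcol. Qed.

Lemma conmat_step_other C j i a b : b != j -> conmat_step same C j i a b = C a b.
Proof. by case: conmat_stepP => // s _ _ _ bj; rewrite mxE (negbTE bj). Qed.

Lemma conmat_step_below C j i i' : (i < i')%N -> conmat_step same C j i i' j = C i' j.
Proof.
case: conmat_stepP => // s _ lows _ ii'.
by rewrite mxE eqxx (@eq0_above_low _ C s i') ?addr0 // lows => l [<-].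
Qed.

Lemma conmat_step_no_hpivot C j i : conmat_step same C j i i j != 0 -> ~~ hpivot C j i.
Proof.
case: conmat_stepP => [//|s _ lows Cij]; rewrite mxE eqxx.
by rewrite (F2_eq1 Cij) (F2_eq1 (low_neq0 lows)) F2_addrr eqxx.
Qed.

Lemma hpivot_free_conmat_rows B C j (rows : seq 'I_n) :
  (forall a b, b != j -> C a b = B a b) ->
  sorted (fun i i' : 'I_n => (i' < i)%N) rows ->
  {in rows, forall i i' : 'I_n, (i' < i)%N -> i' \in rows} ->
  (forall i, C i j != 0 -> (i \in rows) || ~~ hpivot B j i) ->
  forall i, foldl (fun C i => conmat_step same C j i) C rows i j != 0 -> ~~ hpivot B j i.
Proof.
elim: rows C => [|x rows IHrows] C CB /= sorted_rows closed_rows inv.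
  by move=> i /inv.
have /allP lt_x := order_path_min (rev_trans (@ord_ltn_trans n)) sorted_rows.
have below_x i : (i < x)%N -> i \in rows.
  move=> ix; have := closed_rows x (mem_head _ _) i ix.
  by rewrite inE => /predU1P[ix'|//]; rewrite ix' ltnn in ix.
apply: IHrows => [a b bj||y yrows z zy|i].
- by rewrite conmat_step_other // CB.
- exact: path_sorted sorted_rows.
- exact/below_x/(ltn_trans zy)/lt_x.
case: (ltngtP i x) => [ix|xi|/val_inj ->] Cij; first by rewrite below_x.
  rewrite conmat_step_below // in Cij.
  have i_out : i \notin x :: rows.
    rewrite inE negb_or eq_sym (ord_ltn_neq xi) /=.
    by apply/negP => /lt_x; rewrite ltnNge ltnW.
  by case/orP: (inv i Cij) => [/(negP i_out)|->]; rewrite ?orbT.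
rewrite -(@eq_hpivot C) => [|s sj a]; first by rewrite conmat_step_no_hpivot ?orbT.
by rewrite CB // ord_ltn_neq.
Qed.

Lemma conmat_col_other C j a b : b != j -> conmat_col same C j a b = C a b.
Proof.
move=> bj; rewrite /conmat_col; case: (low C j) => // l.
apply: (foldl_inv (I := fun D : 'M_n => D a b = C a b)) => // D i <-.
exact: conmat_step_other.
Qed.

Lemma strictly_upper_conmat_col C j :
  strictly_upper C -> strictly_upper (conmat_col same C j).
Proof.
rewrite /conmat_col; case: (low C j) => // l uC.
by apply: foldl_inv => // D i; apply: strictly_upper_conmat_step.
Qed.

Lemma hpivot_free_conmat_col C j : hpivot_free (conmat_col same C j) j.
Proof.
move=> i; rewrite (@eq_hpivot _ C) => [|s sj a]; last first.
  by rewrite conmat_col_other // ord_ltn_neq.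
rewrite /conmat_col; case lowj: (low C j) => [l|]; last by rewrite (low_None _ lowj) eqxx.
apply: hpivot_free_conmat_rows => //.
- apply: sorted_filter; first exact/rev_trans/ord_ltn_trans.
  by rewrite rev_sorted; exact: ord_enum_sorted.
- move=> i1; rewrite !mem_filter mem_rev mem_enum andbT => i1l i2 i21.
  by rewrite mem_filter mem_rev mem_enum andbT (leq_trans (ltnW i21) i1l).
- by move=> k Ck; rewrite mem_filter mem_rev mem_enum andbT (low_max lowj Ck).
Qed.

Lemma strictly_upper_conmat_reduce B :
  strictly_upper B -> strictly_upper (conmat_reduce same B).
Proof. by move=> uB; apply: foldl_inv => // C j; apply: strictly_upper_conmat_col. Qed.

Lemma foldl_conmat_col_other C (cols : seq 'I_n) a j :
  j \notin cols -> foldl (conmat_col same) C cols a j = C a j.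
Proof.
elim: cols C => //= x cols IHcols C; rewrite inE negb_or => /andP[jx j_out].
by rewrite IHcols // conmat_col_other.
Qed.

Lemma eq_hpivot_free B C j :
  (forall s, (s <= j)%N -> forall a, B a s = C a s) -> hpivot_free B j -> hpivot_free C j.
Proof.
move=> BC hB i; rewrite -BC // => /hB; rewrite (@eq_hpivot _ C) // => s sj.
exact/BC/ltnW.
Qed.

(* Processing column j settles it, and later steps only touch later columns. *)
Lemma hpivot_free_conmat_reduce B j : hpivot_free (conmat_reduce same B) j.
Proof.
rewrite /conmat_reduce; have: j \in enum 'I_n by rewrite mem_enum.
elim: (enum 'I_n) B (ord_enum_sorted n) => //= x cols IHcols C sorted_cols.
rewrite inE => /predU1P[->|j_in]; last exact: IHcols (path_sorted sorted_cols) j_in.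
have /allP x_lt := order_path_min (@ord_ltn_trans n) sorted_cols.
apply: eq_hpivot_free (@hpivot_free_conmat_col C x) => s sx a.
by rewrite foldl_conmat_col_other //; apply/negP => /x_lt; rewrite ltnNge sx.
Qed.

Lemma hpivot_free_low_neq B j1 j2 : hpivot_free B j2 -> (j1 < j2)%N ->
  homogeneous same B j1 -> low B j1 != low B j2.
Proof.
move=> free2 lt12; rewrite /homogeneous; case lowj1: (low B j1) => [l|] // h1.
apply/eqP => lowj2; have /negP[] := free2 l (low_neq0 (esym lowj2)).
by apply/existsP; exists j1; rewrite lt12 /homogeneous lowj1 h1 eqxx.
Qed.

End ConMat.

Section HomogeneousPart.
Variables (n : nat) (same : rel 'I_n).
Hypothesis same_sym : symmetric same.
Hypothesis same_trans : transitive same.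
Hypothesis same_convex : forall a b c : 'I_n, same a c -> (a <= b <= c)%N -> same a b.
Implicit Types (B W : 'M['F_2]_n) (i j s : 'I_n).
Local Open Scope ring_scope.

Definition homog_part B : 'M['F_2]_n := \matrix_(i, j) if same j i then B i j else 0.

Lemma homogeneousE B j :
  strictly_upper B -> homogeneous same B j = (col j (homog_part B) != 0).
Proof.
move=> uB; rewrite /homogeneous; case lowj: (low B j) => [l|]; last first.
  by apply/esym/negbTE/negPn/eqP/colP => i; rewrite !mxE (low_None _ lowj) if_same.
apply/idP/col_neq0P => [jl|[i]]; first by exists l; rewrite mxE jl (low_neq0 lowj).
rewrite mxE; case: ifP => [ji Bij|_]; last by rewrite eqxx.
have il := low_max lowj Bij; have lj := uB _ _ (low_neq0 lowj).
apply: same_trans (ji) (@same_convex i l j _ _); first by rewrite same_sym.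
by rewrite il ltnW.
Qed.

Lemma low_homog_part B j : homogeneous same B j -> low (homog_part B) j = low B j.
Proof.
rewrite /homogeneous; case lowj: (low B j) => [l|] // jl.
apply: low_Some => [|k]; first by rewrite mxE jl (low_neq0 lowj).
by rewrite mxE; case: ifP => [_|]; [exact: low_max lowj | rewrite eqxx].
Qed.

Lemma homog_part_addcol B s j : strictly_upper B -> (s < j)%N ->
  homog_part (addcol B s j) =
  if same s j then addcol (homog_part B) s j else homog_part B.
Proof.
move=> uB sj; apply/matrixP => a b; case: ifP => sj_same; rewrite !mxE;
  have [-> {b}|bj] := eqVneq b j; rewrite ?mxE ?(negbTE bj) //.
  have -> : same s a = same j a.
    have js : same j s by rewrite same_sym.
    by apply/idP/idP => [sa|ja]; [exact: same_trans js sa | exact: same_trans sj_same ja].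
  by case: ifP; rewrite ?addr0.
case: ifP => // ja; suff ->: B a s = 0 by rewrite addr0.
apply/eqP; apply: contraFT sj_same => /uB as_.
have aj : same a j by rewrite same_sym.
have sa : same s a.
  by rewrite same_sym; apply: (same_convex aj); rewrite (ltnW as_) (ltnW sj).
exact: same_trans sa aj.
Qed.

Lemma homog_part_addcols B ops : strictly_upper B -> left_to_right ops ->
  homog_part (addcols B ops) =
  addcols (homog_part B) [seq p <- ops | same p.1 p.2].
Proof.
elim: ops B => //= -[s j] ops IHops B uB /andP[/= sj ops_lr].
rewrite IHops //; last exact: strictly_upper_addcol.
by rewrite homog_part_addcol //; case: ifP.
Qed.

Lemma homog_part_reduced W : strictly_upper W ->
  (forall j1 j2, j1 != j2 -> homogeneous same W j1 -> homogeneous same W j2 ->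
     low W j1 != low W j2) ->
  reduced (homog_part W).
Proof.
move=> uW lows_distinct j1 j2 j12 lowj1.
have homog_low j : low (homog_part W) j != None -> homogeneous same W j.
  case lowj: (low _ j) => [l|] // _; rewrite homogeneousE //.
  by apply/col_neq0P; exists l; exact: low_neq0 lowj.
have h1 := homog_low _ lowj1; have [h2|] := boolP (homogeneous same W j2).
  by rewrite !low_homog_part //; apply: lows_distinct.
by apply: contraNneq => lows_eq; apply: homog_low; rewrite -lows_eq.
Qed.

Theorem homogeneous_complete_reduction B Abar j : strictly_upper B ->
  complete_column_reduction (conmat_reduce same B) Abar ->
  homogeneous same (conmat_reduce same B) j = homogeneous same Abar j.
Proof.
set A := conmat_reduce same B; move=> uB [[ops [ops_lr Abar_def]] redAbar].
have uA : strictly_upper A := strictly_upper_conmat_reduce uB.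
have uAbar : strictly_upper Abar by rewrite Abar_def; exact: strictly_upper_addcols.
have red_hA : reduced (homog_part A).
  apply: homog_part_reduced => // j1 j2 j12 h1 h2.
  have free := @hpivot_free_conmat_reduce _ same B.
  case: (ltngtP j1 j2) => [lt12|lt21|/val_inj eq12]; last by rewrite eq12 eqxx in j12.
    exact: hpivot_free_low_neq (free j2) lt12 h1.
  by rewrite eq_sym; exact: hpivot_free_low_neq (free j1) lt21 h2.
have red_hAbar : reduced (homog_part Abar).
  apply: homog_part_reduced => // j1 j2 j12 h1 _; apply: redAbar j12 _.
  by move: h1; rewrite /homogeneous; case: (low Abar j1).
have spans k : (cols_lt k (homog_part Abar) :=: cols_lt k (homog_part A))%MS.
  have hops_lr : left_to_right [seq p <- ops | same p.1 p.2].
    by apply/allP => p; rewrite mem_filter => /andP[_ /(allP ops_lr)].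
  by rewrite Abar_def homog_part_addcols //; exact: cols_lt_addcols.
rewrite !homogeneousE // (reduced_col_eq0 _ red_hA) (reduced_col_eq0 _ red_hAbar).
by rewrite !spans.
Qed.

End HomogeneousPart.

Section AdmissibleEnumeration.
Variables (V : finType) (K : {set {set V}}) (mvf : {set {set {set V}}}).
Variables (d : Order.disp_t) (P : finPOrderType d) (M : P -> {set {set V}}).
Variables (n : nat) (sigma : 'I_n -> {set V}).
Hypothesis morseM : morse_decomposition K mvf M.
Hypothesis admissible : admissible_enumeration K M sigma.

Lemma morse_set_uniq i p q : sigma i \in M p -> sigma i \in M q -> p = q.
Proof.
case: morseM => disjM _ _ ip iq; apply/eqP; apply: contraT => pq.
by rewrite (disjointFr (disjM p q pq) ip) in iq.
Qed.

Lemma morse_set_exists i : exists p, sigma i \in M p.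
Proof.
case: morseM admissible => _ coverM _ [_ sigmaK _ _ _].
have /bigcupP[p _ ip] : sigma i \in \bigcup_p M p by rewrite coverM.
by exists p.
Qed.

Lemma same_morse_sym : symmetric (same_morse M sigma).
Proof. by move=> i j; apply: eq_existsb => p; rewrite andbC. Qed.

Lemma same_morse_trans : transitive (same_morse M sigma).
Proof.
move=> j i k /existsP[p /andP[ip jp]] /existsP[q /andP[jq kq]].
by apply/existsP; exists q; rewrite kq andbT -(morse_set_uniq jp jq).
Qed.

Lemma same_morse_convex (i j k : 'I_n) :
  same_morse M sigma i k -> (i <= j <= k)%N -> same_morse M sigma i j.
Proof.
case: admissible => _ _ _ [lin [[_ lin_anti _ _ _] lin_enum]] _.
move=> /existsP[p /andP[ip kp]] /andP[ij jk]; have [q jq] := morse_set_exists j.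
have pq : p = q by apply: lin_anti; rewrite (lin_enum i j p q) ?(lin_enum j k q p).
by apply/existsP; exists p; rewrite ip pq jq.
Qed.

Lemma boundary_matrix_strictly_upper : strictly_upper (boundary_matrix sigma).
Proof.
case: admissible => _ _ _ _ faces_first i j; rewrite mxE.
case: ifP => [/andP[sub /eqP card] _|_]; last by rewrite eqxx.
by apply: faces_first; rewrite properEcard sub card ltnSn.
Qed.

End AdmissibleEnumeration.

Theorem proposition3 (V : finType) (K : {set {set V}}) (mvf : {set {set {set V}}})
    (d : Order.disp_t) (P : finPOrderType d) (M : P -> {set {set V}})
    (n : nat) (sigma : 'I_n -> {set V}) (Abar : 'M['F_2]_n) :
  simplicial_complex K ->
  multivector_field K mvf ->
  morse_decomposition K mvf M ->
  admissible_enumeration K M sigma ->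
  complete_column_reduction
    (conmat_reduce (same_morse M sigma) (boundary_matrix sigma)) Abar ->
  forall j : 'I_n,
    homogeneous (same_morse M sigma)
      (conmat_reduce (same_morse M sigma) (boundary_matrix sigma)) j
    = homogeneous (same_morse M sigma) Abar j.
Proof.
move=> _ _ morseM admissible Abar_red j.
apply: (homogeneous_complete_reduction (same_morse_sym M sigma)
  (same_morse_trans morseM) (same_morse_convex morseM admissible) j _ Abar_red).
exact: boundary_matrix_strictly_upper admissible.
Qed.
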